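(* For $r\ge1$ and $1\le l\le r$, \[ \frac{\partial}{\partial a_l}C_{1,r}(a_1,\dots,a_r)=-\sum_{k=l}^rC_{1,k-1}(a_1,\dots,a_{k-1})\,C_{1,r-k}(a_{k+1},\dots,a_r). \] Consequently, with $C_{1,r}(a)=C_{1,r}(a,\dots,a)$, \[ C_{1,r}'(a)=-\sum_{l=1}^r\sum_{k=l}^rC_{1,k-1}(a)C_{1,r-k}(a)=-\sum_{k=1}^rk\,C_{1,r-k}(a)\,C_{1,k-1}(a). \]
   Context: Bernoulli polynomials $B_n(a)$: $\sum_{n\ge0}B_n(a)x^n/n!=xe^{ax}/(e^x-1)$. For $r\ge1$, $S_r=\{(n_1,\dots,n_r)\in\mathbb Z_{\ge0}^r: n_1+\dots+n_r=r,\ n_{j+1}+\dots+n_r\le r-j\ (1\le j<r)\}$ and $C_{1,r}(a_1,\dots,a_r)=(-1)^r\sum_{(n_1,\dots,n_r)\in S_r}\prod_{j=1}^r\frac{B_{n_j}(a_j)}{n_j!}$. By convention $C_{1,0}()=C_{1,0}(a)=1$. *)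

From HB Require Import structures.
From mathcomp Require Import all_boot all_order all_algebra.
From mathcomp Require Import all_classical all_reals all_analysis.
Set Implicit Arguments. Unset Strict Implicit. Unset Printing Implicit Defensive.
Import Order.TTheory GRing.Theory Num.Theory.
Local Open Scope ring_scope.

(* Bernoulli polynomials via the generating function
     sum_n B_n(a) x^n/n! = x e^{ax}/(e^x - 1),
   i.e. (e^x - 1) * sum_n B_n(a) x^n/n! = x e^{ax}; comparing coefficients
   of x^(m+1)/(m+1)! gives  sum_{k<=m} C(m+1,k) B_k(a) = (m+1) a^m, i.e.
     B_m(a) = a^m - 1/(m+1) * sum_{k<m} C(m+1,k) B_k(a).
   bseq a m = [:: B_0(a); ...; B_m(a)]. *)
Fixpoint bseq (R : realType) (a : R) (m : nat) : seq R :=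
  match m with
  | 0 => [:: 1]
  | m'.+1 =>
      let s := bseq a m' in
      rcons s (a ^+ m'.+1
               - (m'.+2)%:R^-1 * \sum_(k < m'.+1) 'C(m'.+2, k)%:R * s`_k)
  end.

Definition bernoulli_poly (R : realType) (m : nat) (a : R) : R :=
  (bseq a m)`_m.

(* S_r, encoded with 0-based positions: n : 'I_r -> 'I_r.+1 (entries are
   automatically <= r since they sum to r); the position jj (0-based) holds
   n_{jj+1}. *)
Definition in_S (r : nat) (n : {ffun 'I_r -> 'I_r.+1}) : bool :=
  ((\sum_(j < r) (n j : nat))%N == r) &&
  [forall j : 'I_r, (0 < (j : nat))%N ==>
     ((\sum_(i < r | (j <= i)%N) (n i : nat))%N <= r - j)%N].

(* C_{1,r}(a_1,...,a_r), where the arguments are a 1, ..., a r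
   (the values of a at other indices are irrelevant).
   For r = 0 this is 1 (the single empty composition), matching the convention. *)
Definition C1 (R : realType) (r : nat) (a : nat -> R) : R :=
  (-1) ^+ r * \sum_(n : {ffun 'I_r -> 'I_r.+1} | in_S n)
     \prod_(j < r) (bernoulli_poly (n j) (a j.+1) / ((n j)`!)%:R).

Definition upd (R : realType) (a : nat -> R) (l : nat) (t : R) : nat -> R :=
  fun i => if i == l then t else a i.

From Pilot Require Import Defs.
From HB Require Import structures.
From mathcomp Require Import all_boot all_order all_algebra.
From mathcomp Require Import all_classical all_reals all_analysis.
From mathcomp Require Import zify ring.
Import Order.TTheory GRing.Theory Num.Theory numFieldNormedType.Exports.
Local Open Scope ring_scope.
Set Implicit Arguments.
Unset Strict Implicit.

(* Write E_p = B_p / p! ([bernf p]).  Since B_p' = p B_(p-1), we get E_p' = E_(p-1)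
   (and E_0' = 0), so differentiating C_(1,r) in a_l lowers by one the entry n_l of each
   n in S_r with n_l > 0.  In prefix form S_r is the set of lattice paths with
   n_1 + ... + n_j >= j, ending at r.  The lowered path m stays weakly above the diagonal
   before l and at most one below it afterwards, and it ends at r - 1; cutting it at the
   first k >= l with m_1 + ... + m_k = k - 1 (which forces m_k = 0) splits it bijectively
   into an element of S_(k-1) and one of S_(r-k).  The sign
   (-1)^r = -(-1)^(k-1) (-1)^(r-k) gives the first formula.  For C_(1,r)(a, ..., a) the
   Leibniz rule yields the sum of these partial derivatives over l, and counting the
   pairs l <= k gives the factor k. *)

Section Derivatives.
Variables (K : numFieldType) (V : normedModType K).

Lemma is_derive_sum_pred (W : normedModType K) (I : finType) (P : pred I)
    (h : I -> V -> W) (dh : I -> W) (x v : V) :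
  (forall i, is_derive x v (h i) (dh i)) ->
  is_derive x v (fun t => \sum_(i | P i) h i t) (\sum_(i | P i) dh i).
Proof.
move=> hd; rewrite -fct_sumE.
elim/big_ind2 : _ => // [|f df g dg]; first exact: is_derive_cst.
exact: is_deriveD.
Qed.

Lemma is_derive_prod n (F : 'I_n -> V -> K) (dF : 'I_n -> K) (x v : V) :
  (forall j, is_derive x v (F j) (dF j)) ->
  is_derive x v (fun t => \prod_(j < n) F j t)
    (\sum_(j0 < n) \prod_(j < n) (if j == j0 then dF j else F j x)).
Proof.
elim: n F dF => [|n IH] F dF dFj.
  rewrite big_ord0; under eq_fun do rewrite big_ord0; exact: is_derive_cst.
pose G j := F (widen_ord (leqnSn n) j).
have -> : (fun t => \prod_(j < n.+1) F j t) = (fun t => \prod_(j < n) G j t) * F ord_max.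
  by apply/funext => t; rewrite big_ord_recr.
have dG j : is_derive x v (G j) (dF (widen_ord (leqnSn n) j)) by exact: dFj.
apply: (is_derive_eq (is_deriveM (IH G _ dG) (dFj ord_max))).
rewrite /= [RHS]big_ord_recr /= big_ord_recr /= eqxx.
rewrite -[_ *: dF _]/(_ * _) -[F _ x *: _]/(_ * _) mulr_sumr addrC.
congr (_ + _).
  congr (_ * _); apply: eq_bigr => j _.
  have jn : (widen_ord (leqnSn n) j == ord_max) = false.
    by rewrite -val_eqE /= ltn_eqF.
  by rewrite jn.
apply: eq_bigr => j0 _; rewrite [RHS]big_ord_recr /= mulrC.
have j0n : (ord_max == widen_ord (leqnSn n) j0) = false.
  by rewrite -val_eqE /= gtn_eqF.
by rewrite j0n; congr (_ * _).
Qed.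

End Derivatives.

Section Bernoulli.
Variable R : realType.
Implicit Types (a x : R) (m p : nat).

Lemma size_bseq a m : size (Defs.bseq a m) = m.+1.
Proof. by elim: m => //= m IH; rewrite size_rcons IH. Qed.

Lemma nth_bseq a m k : (k <= m)%N -> (Defs.bseq a m)`_k = bernoulli_poly k a.
Proof.
elim: m => [|m IH]; first by rewrite leqn0 => /eqP ->.
rewrite leq_eqVlt => /predU1P [-> //|]; rewrite ltnS => km /=.
by rewrite nth_rcons size_bseq ltnS km; exact: IH.
Qed.

Lemma bernoulli_polyS a m : bernoulli_poly m.+1 a =
  a ^+ m.+1 - (m.+2)%:R^-1 * \sum_(k < m.+1) 'C(m.+2, k)%:R * bernoulli_poly k a.
Proof.
rewrite /bernoulli_poly /= nth_rcons size_bseq ltnn eqxx; congr (_ - _ * _).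
by apply: eq_bigr => k _; rewrite nth_bseq // -ltnS.
Qed.

Lemma is_derive_bernoulli_poly m x :
  is_derive x 1 (bernoulli_poly m) (m%:R * bernoulli_poly m.-1 x).
Proof.
elim/ltn_ind: m x => -[_ x|m IH x].
  by rewrite mul0r; exact: is_derive_cst.
have -> : bernoulli_poly m.+1 = (id : R -> R) ^+ m.+1 -
    (m.+2)%:R^-1 \*: \sum_(k < m.+1) 'C(m.+2, k)%:R \*: bernoulli_poly k.
  by apply/funext => t; rewrite bernoulli_polyS !fctE fct_sumE.
have dsum : is_derive x 1 (\sum_(k < m.+1) 'C(m.+2, k)%:R \*: bernoulli_poly k)
    (\sum_(k < m.+1) 'C(m.+2, k)%:R *: (k%:R * bernoulli_poly k.-1 x)).
  by apply: is_derive_sum => k; exact: is_deriveZ (IH k (ltn_ord k) x).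
apply: (is_derive_eq (is_deriveB (is_deriveX m.+1 (is_derive_id x 1))
                                 (is_deriveZ (m.+2)%:R^-1 dsum))).
rewrite /GRing.scale /= mulr1 big_ord_recl /= mul0r mulr0 add0r.
have binS i : 'C(m.+2, i.+1)%:R * (i.+1)%:R = (m.+2)%:R * 'C(m.+1, i)%:R :> R.
  by rewrite -!natrM mulnC -mul_bin_diag.
under eq_bigr do rewrite /bump add1n add0n mulrA binS -mulrA.
rewrite -mulr_sumr mulrA mulVf ?pnatr_eq0 // mul1r.
case: m {IH dsum binS} => [|m]; first by rewrite big_ord0 subr0 expr0 mulr1.
by rewrite bernoulli_polyS mulrBr mulrA divff ?pnatr_eq0 // mul1r.
Qed.

Definition bernf p x := bernoulli_poly p x / p`!%:R.

Definition dbernf p x := if p is q.+1 then bernf q x else 0.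

Lemma bernf0 x : bernf 0 x = 1.
Proof. by rewrite /bernf divr1. Qed.

Lemma is_derive_bernf p x : is_derive x 1 (bernf p) (dbernf p x).
Proof.
have -> : bernf p = p`!%:R^-1 \*: bernoulli_poly p.
  by apply/funext => t; rewrite /bernf mulrC.
apply: (is_derive_eq (is_deriveZ _ (is_derive_bernoulli_poly p x))).
case: p => [|p]; first by rewrite mul0r scaler0.
rewrite /dbernf /bernf /GRing.scale /= factS natrM invfM.
by rewrite mulrAC mulrA mulVf ?pnatr_eq0 // mul1r mulrC.
Qed.

Lemma C1E r (a : nat -> R) : C1 r a =
  (-1) ^+ r * \sum_(n : {ffun 'I_r -> 'I_r.+1} | in_S n) \prod_(j < r) bernf (n j) (a j.+1).
Proof. by []. Qed.

End Bernoulli.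

Section LatticePaths.
Local Open Scope nat_scope.

Definition ext0 q M (n : {ffun 'I_q -> 'I_M}) (j : nat) : nat :=
  if (insub j : option 'I_q) is Some i then n i else 0.

Lemma ext0E q M (n : {ffun 'I_q -> 'I_M}) (i : 'I_q) : ext0 n i = n i.
Proof. by rewrite /ext0 valK. Qed.

Lemma ext0_out q M (n : {ffun 'I_q -> 'I_M}) j : q <= j -> ext0 n j = 0.
Proof. by move=> qj; rewrite /ext0 insubN // -leqNgt. Qed.

Lemma ext0_le q M (n : {ffun 'I_q -> 'I_M.+1}) j : ext0 n j <= M.
Proof.
case: (ltnP j q) => [jq|]; last by move/ext0_out ->.
by rewrite -[j]/(nat_of_ord (Ordinal jq)) ext0E -ltnS.
Qed.

Lemma ext0_inj q M (n1 n2 : {ffun 'I_q -> 'I_M}) :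
  (forall j, j < q -> ext0 n1 j = ext0 n2 j) -> n1 = n2.
Proof. by move=> e; apply/ffunP => i; apply: val_inj; rewrite /= -!ext0E e. Qed.

Definition psum (f : nat -> nat) j := \sum_(0 <= i < j) f i.

Lemma psum0 f : psum f 0 = 0.
Proof. by rewrite /psum big_geq. Qed.

Lemma psumS f j : psum f j.+1 = psum f j + f j.
Proof. by rewrite /psum big_nat_recr. Qed.

Lemma leq_psum f i j : i <= j -> psum f i <= psum f j.
Proof. by move=> ij; rewrite /psum (big_cat_nat (leq0n i) ij) leq_addr. Qed.

Lemma eq_psum f g j : (forall i, i < j -> f i = g i) -> psum f j = psum g j.
Proof. by move=> e; apply: eq_big_nat => i /andP[_ /e]. Qed.

Lemma psumD f i j : psum f (i + j) = psum f i + psum (fun t => f (t + i)) j.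
Proof.
elim: j => [|j IH]; first by rewrite addn0 psum0 addn0.
by rewrite addnS !psumS IH addnA (addnC j i).
Qed.

Definition ballot r f := (psum f r == r) && [forall j : 'I_r, j <= psum f j].

Lemma ballotP r f :
  reflect (psum f r = r /\ forall j, j < r -> j <= psum f j) (ballot r f).
Proof.
apply: (iffP andP) => [[/eqP fr /forallP fj]|[fr fj]]; split => //.
- by move=> j jr; exact: (fj (Ordinal jr)).
- exact/eqP.
- by apply/forallP => j; exact: fj.
Qed.

Lemma in_S_ballot r (n : {ffun 'I_r -> 'I_r.+1}) : in_S n = ballot r (ext0 n).
Proof.
have tot : \sum_(j < r) (n j : nat) = psum (ext0 n) r.
  by rewrite /psum big_mkord; apply: eq_bigr => i _; rewrite ext0E.
have suf (j : 'I_r) :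
    \sum_(i < r | j <= i) (n i : nat) = psum (ext0 n) r - psum (ext0 n) j.
  rewrite /psum (big_cat_nat (leq0n j) (ltnW (ltn_ord j))) /= addKn.
  by rewrite big_geq_mkord; apply: eq_bigr => i _; rewrite ext0E.
rewrite /in_S /ballot tot; case: eqP => //= fr.
apply/forallP/forallP => h j; have := leq_psum (ext0 n) (ltnW (ltn_ord j)).
  rewrite fr => psum_le; have := ltn_ord j.
- case: (posnP j) => [-> //|j_gt0]; have := implyP (h j) j_gt0.
  by rewrite suf fr; lia.
- by move=> jr; apply/implyP => _; rewrite suf fr; have := h j; lia.
Qed.

End LatticePaths.

Definition C1_partial (R : realType) r l0 (a : nat -> R) : R :=
  (-1) ^+ r * \sum_(n : {ffun 'I_r -> 'I_r.+1} | in_S n) \prod_(j < r)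
     (if j == l0 :> nat then dbernf (n j) (a j.+1) else bernf (n j) (a j.+1)).

Section FirstReturn.
Variables (R : realType) (r l0 : nat) (a : nat -> R).
Hypothesis l0_lt_r : (l0 < r)%N.
Implicit Types (n : {ffun 'I_r -> 'I_r.+1}) (j k : nat).

Definition lowered n j := (ext0 n j - (j == l0))%N.

Definition ballot_pos n := ballot r (ext0 n) && (0 < ext0 n l0)%N.

Definition first_return k n := (psum (lowered n) k.+1 == k) &&
  [forall j : 'I_k, (l0 <= j)%N ==> (psum (lowered n) j.+1 != j)].

Definition weight n : R := \prod_(j < r) bernf (lowered n j) (a j.+1).

Lemma psum_lowered n : (0 < ext0 n l0)%N ->
  forall j, psum (ext0 n) j = (psum (lowered n) j + (l0 < j))%N.
Proof.
move=> n_pos; elim=> [|j IH]; first by rewrite !psum0.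
rewrite !psumS IH /lowered ltnS; case: (ltngtP l0 j) => [lj|jl|<-] /=; lia.
Qed.

Lemma C1_partial_weight :
  C1_partial r l0 a = (-1) ^+ r * \sum_(n | ballot_pos n) weight n.
Proof.
rewrite /C1_partial /ballot_pos; congr (_ * _); rewrite [RHS]big_mkcondr.
apply: eq_big => [n|n _]; first by rewrite in_S_ballot.
set l := Ordinal l0_lt_r; have nl : ext0 n l0 = n l by rewrite -ext0E.
have jl0 (j : 'I_r) : j != l -> (j == l0 :> nat) = false.
  by move=> jl; apply: contraNF jl => /eqP jl; apply/eqP/val_inj.
rewrite (bigD1 l) //= eqxx /weight [in RHS](bigD1 l) //= /lowered eqxx nl.
rewrite (eq_bigr (fun j : 'I_r => bernf (n j) (a j.+1))); last by move=> j /jl0 ->.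
rewrite [in RHS](eq_bigr (fun j : 'I_r => bernf (n j) (a j.+1))); last first.
  by move=> j /jl0 ->; rewrite subn0 ext0E.
by case: (n l : nat) => [|p] /=; rewrite ?mul0r ?subn1.
Qed.

Lemma first_return_uniq n k k' : (l0 <= k)%N -> (l0 <= k')%N ->
  first_return k n -> first_return k' n -> k = k'.
Proof.
move=> lk lk' /andP[/eqP e /forallP f] /andP[/eqP e' /forallP f'].
case: (ltngtP k k') => // kk.
- by have := implyP (f' (Ordinal kk)) lk; rewrite /= e eqxx.
- by have := implyP (f (Ordinal kk)) lk'; rewrite /= e' eqxx.
Qed.

Lemma first_return_exists n :
  ballot_pos n -> exists2 k, (l0 <= k < r)%N & first_return k n.
Proof.
move=> /andP[/ballotP[nr _] n_pos].
have lr : psum (lowered n) r = r.-1 by have := psum_lowered n_pos r; rewrite nr l0_lt_r; lia.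
pose returns k := (l0 <= k)%N && (psum (lowered n) k.+1 == k).
have ret_last : returns r.-1 by rewrite /returns prednK ?lr ?eqxx ?andbT; lia.
case: (ex_minnP (ex_intro returns _ ret_last)) => k /andP[lk /eqP ret] kmin.
exists k; first by have := kmin _ ret_last; lia.
rewrite /first_return ret eqxx; apply/forallP => j; apply/implyP => lj.
apply/eqP => ret_j; have := kmin j; rewrite /returns lj ret_j eqxx => /(_ isT).
by have := ltn_ord j; lia.
Qed.

Lemma sum_by_first_return :
  \sum_(n | ballot_pos n) weight n =
  \sum_(l0 <= k < r) \sum_(n | ballot_pos n && first_return k n) weight n.
Proof.
rewrite -(exchange_big_dep xpredT) //=; apply: eq_bigr => n n_pos.
have [k /andP[lk kr] fk] := first_return_exists n_pos.
rewrite big_nat_cond big_mkcond (bigD1_seq k) ?mem_index_iota ?iota_uniq ?lk //=.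
rewrite kr fk /= big1 ?addr0 // => k' /negbTE kk.
case: ifP => // /andP[/andP[lk' _] fk'].
by rewrite (first_return_uniq lk' lk fk' fk) eqxx in kk.
Qed.

Section Cut.
Variable k : nat.
Hypotheses (l0_le_k : (l0 <= k)%N) (k_lt_r : (k < r)%N).
Local Notation m := (r - k.+1)%N.
Local Notation pair_type := ({ffun 'I_k -> 'I_k.+1} * {ffun 'I_m -> 'I_m.+1})%type.
Implicit Type p : pair_type.

Definition glue p j :=
  if (j < k)%N then ext0 p.1 j else if j == k then 0%N else ext0 p.2 (j - k.+1).

Definition join p : {ffun 'I_r -> 'I_r.+1} :=
  [ffun j : 'I_r => inord (glue p j + (j == l0 :> nat))].

Definition cut n : pair_type :=
  ([ffun i : 'I_k => inord (lowered n i)],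
   [ffun i : 'I_m => inord (lowered n (i + k.+1))]).

Lemma glue_le p j : (glue p j + (j == l0) <= r)%N.
Proof.
rewrite /glue; case: ifP => jk; first by have := ext0_le p.1 j; case: (j == l0); lia.
case: ifP => [_|jk']; first by case: (j == l0); lia.
by have := ext0_le p.2 (j - k.+1); case: eqP; lia.
Qed.

Lemma glue_out p j : (r <= j)%N -> glue p j = 0%N.
Proof.
move=> rj; rewrite /glue ifF; last by apply/negbTE; lia.
by rewrite ifF ?ext0_out //; [lia | apply/negbTE; lia].
Qed.

Lemma ext0_join p j : ext0 (join p) j = (glue p j + (j == l0))%N.
Proof.
case: (ltnP j r) => [jr|rj].
  by rewrite -[j]/(nat_of_ord (Ordinal jr)) ext0E ffunE inordK // ltnS glue_le.
by rewrite ext0_out // glue_out //; case: eqP => //; lia.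
Qed.

Lemma lowered_join p j : lowered (join p) j = glue p j.
Proof. by rewrite /lowered ext0_join addnK. Qed.

Lemma psum_glue_lo p j : (j <= k)%N -> psum (glue p) j = psum (ext0 p.1) j.
Proof. by move=> jk; apply: eq_psum => i ij; rewrite /glue ifT //; lia. Qed.

Lemma psum_glue_hi p i :
  psum (glue p) (k.+1 + i) = (psum (ext0 p.1) k + psum (ext0 p.2) i)%N.
Proof.
rewrite psumD psumS psum_glue_lo // [glue p k]/glue ltnn eqxx addn0; congr addn.
apply: eq_psum => t _; rewrite /glue ifF; last by apply/negbTE; lia.
by rewrite ifF ?addnK //; apply/negbTE; lia.
Qed.

Lemma join_pos p : (0 < ext0 (join p) l0)%N.
Proof. by rewrite ext0_join eqxx addn1. Qed.

Lemma psum_lowered_join p j : psum (lowered (join p)) j = psum (glue p) j.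
Proof. by apply: eq_psum => i _; exact: lowered_join. Qed.

Lemma psum_join p j : psum (ext0 (join p)) j = (psum (glue p) j + (l0 < j))%N.
Proof. by rewrite (psum_lowered (join_pos p)) psum_lowered_join. Qed.

Lemma ballot_join p : ballot r (ext0 (join p)) -> first_return k (join p) ->
  ballot k (ext0 p.1) && ballot m (ext0 p.2).
Proof.
move=> /ballotP[jr jge] /andP[/eqP ret /forallP no_ret].
have p1k : psum (ext0 p.1) k = k.
  by move: ret; rewrite psum_lowered_join psumS psum_glue_lo // /glue ltnn eqxx addn0.
have r_split : r = (k.+1 + m)%N by lia.
apply/andP; split; apply/ballotP; split => //.
- move=> j jk; have := jge j (ltn_trans jk k_lt_r).
  rewrite psum_join psum_glue_lo; last lia.
  case: (ltnP l0 j) => [lj|]; last by move=> /= jl; lia.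
  have j1k : (j.-1 < k)%N by lia.
  have := implyP (no_ret (Ordinal j1k)) ltac:(simpl; lia).
  rewrite /= prednK ?psum_lowered_join ?psum_glue_lo; [|lia|lia].
  by move=> /eqP; lia.
- by move: jr; rewrite psum_join l0_lt_r {1}r_split psum_glue_hi p1k; lia.
- move=> i im; have := jge (k.+1 + i)%N ltac:(lia).
  have lki : (l0 < k.+1 + i)%N by lia.
  by rewrite psum_join psum_glue_hi p1k lki; lia.
Qed.

Lemma join_ballot p : ballot k (ext0 p.1) -> ballot m (ext0 p.2) ->
  ballot r (ext0 (join p)) && first_return k (join p).
Proof.
move=> /ballotP[p1k p1ge] /ballotP[p2m p2ge].
have ret : psum (glue p) k.+1 = k by rewrite psumS psum_glue_lo // p1k /glue ltnn eqxx addn0.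
rewrite /first_return psum_lowered_join ret eqxx /=; apply/andP; split.
- apply/ballotP; split.
    by rewrite psum_join l0_lt_r -(subnKC k_lt_r) psum_glue_hi p1k p2m; lia.
  move=> j jr; rewrite psum_join; case: (leqP j k) => [jk|kj].
    rewrite psum_glue_lo //; case: (ltnP j k) => [/p1ge|]; first lia.
    move=> kj; have -> : j = k by lia.
    by rewrite p1k; lia.
  have lj : (l0 < j)%N by lia.
  rewrite lj -[X in psum _ X](subnKC kj) psum_glue_hi p1k.
  by have := p2ge (j - k.+1)%N ltac:(lia); lia.
- apply/forallP => j; apply/implyP => lj; have jk := ltn_ord j.
  rewrite psum_lowered_join psum_glue_lo //; case: (ltnP j.+1 k) => [/p1ge|]; first lia.
  move=> kj; have -> : j.+1 = k by lia.
  by rewrite p1k; lia.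
Qed.

Lemma join_first_returnE p : ballot_pos (join p) && first_return k (join p) =
  ballot k (ext0 p.1) && ballot m (ext0 p.2).
Proof.
rewrite /ballot_pos join_pos andbT.
by apply/idP/idP => /andP[]; [exact: ballot_join | exact: join_ballot].
Qed.

Lemma first_return_psum n : ballot_pos n -> first_return k n ->
  [/\ psum (lowered n) k = k, lowered n k = 0%N & psum (lowered n) r = r.-1].
Proof.
move=> /andP[/ballotP[nr nge] n_pos] /andP[/eqP ret /forallP no_ret].
have psumE := psum_lowered n_pos.
have lr : psum (lowered n) r = r.-1 by have := psumE r; rewrite nr l0_lt_r; lia.
have lk : psum (lowered n) k = k.
  have := nge k k_lt_r; rewrite psumE; have := leq_psum (lowered n) (leqnSn k).
  rewrite ret; case: (ltnP l0 k) => [lk|]; last by move=> /= kl; lia.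
  have k1k : (k.-1 < k)%N by lia.
  have := implyP (no_ret (Ordinal k1k)) ltac:(simpl; lia).
  by rewrite /= prednK; [move=> /eqP; lia | lia].
by split => //; move: ret; rewrite psumS lk; lia.
Qed.

Lemma cut_join p : cut (join p) = p.
Proof.
case: p => p1 p2; congr pair; apply/ffunP => i; apply: val_inj;
  rewrite ffunE /= lowered_join /glue.
  by rewrite ifT // ext0E inordK.
rewrite ifF; last by apply/negbTE; lia.
by rewrite ifF ?addnK ?ext0E ?inordK //; apply/negbTE; lia.
Qed.

Lemma join_cut n : ballot_pos n && first_return k n -> join (cut n) = n.
Proof.
move=> /andP[n_pos ret]; have [lk lk0 lr] := first_return_psum n_pos ret.
apply: ext0_inj => j jr; rewrite ext0_join /glue.
case: ifP => [jk|kj].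
  have ljk : (lowered n j <= k)%N.
    by have := leq_psum (lowered n) jk; rewrite psumS lk; lia.
  rewrite -[j]/(nat_of_ord (Ordinal jk)) ext0E ffunE inordK //=.
  rewrite /lowered; case: eqP => [->|_]; rewrite ?subn0 ?addn0 //.
  by move: n_pos => /andP[_]; rewrite subn1 addn1 => /prednK.
case: ifP => [/eqP->|jk'].
  by move: n_pos lk0 => /andP[_]; rewrite /lowered; case: eqP => [->|]; lia.
have jm : (j - k.+1 < m)%N by lia.
have kj' : (k.+1 <= j)%N by lia.
rewrite -[(j - k.+1)%N]/(nat_of_ord (Ordinal jm)) ext0E ffunE inordK /= subnK //.
  have /negPf jl : j != l0 by apply/eqP; lia.
  by rewrite jl addn0 /lowered jl subn0.
have := leq_psum (lowered n) jr; rewrite psumS lr.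
by have := leq_psum (lowered n) kj'; move: ret => /andP[/eqP -> _]; lia.
Qed.

Lemma weight_join p : weight (join p) =
  \prod_(j < k) bernf (p.1 j) (a j.+1) * \prod_(i < m) bernf (p.2 i) (a (i.+1 + k.+1)).
Proof.
have -> : weight (join p) = \prod_(0 <= j < r) bernf (glue p j) (a j.+1).
  by rewrite big_mkord; apply: eq_bigr => j _; rewrite lowered_join.
rewrite (big_cat_nat (leq0n k.+1) k_lt_r) big_nat_recr //= [glue p k]/glue ltnn eqxx.
rewrite bernf0 mulr1 -[X in \prod_(X <= _ < r) _](add0n k.+1) big_addn !big_mkord.
congr (_ * _).
  by apply: eq_bigr => j _; rewrite /glue ltn_ord ext0E.
apply: eq_bigr => i _; have im := ltn_ord i.
rewrite /glue ifF; last by apply/negbTE; lia.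
by rewrite ifF ?addnK ?ext0E ?addSn //; apply/negbTE; lia.
Qed.

Lemma sum_first_return :
  \sum_(n | ballot_pos n && first_return k n) weight n =
  (\sum_(n1 : {ffun 'I_k -> 'I_k.+1} | in_S n1) \prod_(j < k) bernf (n1 j) (a j.+1)) *
  (\sum_(n2 : {ffun 'I_m -> 'I_m.+1} | in_S n2)
     \prod_(i < m) bernf (n2 i) (a (i.+1 + k.+1))).
Proof.
rewrite big_distrlr pair_big_dep /= (reindex_onto join cut join_cut) /=.
apply: eq_big => p; last by rewrite weight_join.
by rewrite join_first_returnE cut_join eqxx andbT !in_S_ballot.
Qed.

End Cut.

Lemma C1_partialE : C1_partial r l0 a =
  - \sum_(l0 <= k < r) C1 k a * C1 (r - k.+1) (fun i => a (i + k.+1)%N).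
Proof.
rewrite C1_partial_weight sum_by_first_return mulr_sumr -sumrN.
apply: eq_big_nat => k /andP[lk kr]; rewrite sum_first_return // !C1E.
have -> : (-1) ^+ r = - ((-1) ^+ k * (-1) ^+ (r - k.+1)) :> R.
  by rewrite -exprD -[RHS]mulN1r -exprS; congr (_ ^+ _); lia.
ring.
Qed.

End FirstReturn.

Section PartialDerivatives.
Variable R : realType.

Lemma is_derive_C1_upd r l0 (a : nat -> R) : (l0 < r)%N ->
  is_derive (a l0.+1) 1 (fun t => C1 r (upd a l0.+1 t)) (C1_partial r l0 a).
Proof.
move=> l0r; set x := a l0.+1.
have upd_x j : upd a l0.+1 x j = a j by rewrite /upd; case: eqP => [->|].
under eq_fun do rewrite C1E.
apply: is_deriveZ; apply: is_derive_sum_pred => n.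
pose dF (j : 'I_r) := if j == l0 :> nat then dbernf (n j) x else 0.
apply: (is_derive_eq (is_derive_prod (dF := dF) _)).
  move=> j; rewrite /dF; case: eqP => [jl|/eqP jl].
    under eq_fun do rewrite /upd jl eqxx; exact: is_derive_bernf.
  under eq_fun do rewrite /upd eqSS (negbTE jl); exact: is_derive_cst.
rewrite (bigD1 (Ordinal l0r)) //= [X in _ + X]big1 ?addr0 => [|j0 j0l]; last first.
  rewrite (bigD1 j0) //= eqxx /dF ifF ?mul0r //.
  by apply: contraNF j0l => /eqP jl; apply/eqP/val_inj.
apply: eq_bigr => j _; rewrite /dF upd_x; case: eqP => [-> /=|jl]; first by rewrite eqxx.
by rewrite ifF //; apply/eqP => jl'; apply/jl/val_inj.
Qed.

Lemma is_derive_C1_const r (x : R) : is_derive x 1 (fun t => C1 r (fun=> t))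
  (\sum_(l0 < r) C1_partial r l0 (fun=> x)).
Proof.
under eq_fun do rewrite C1E.
rewrite /C1_partial -mulr_sumr exchange_big /=.
apply: is_deriveZ; apply: is_derive_sum_pred => n.
exact: is_derive_prod (fun j => is_derive_bernf (n j) x).
Qed.

End PartialDerivatives.

Lemma sum_triangle (R : pzSemiRingType) (F : nat -> R) n :
  \sum_(1 <= l < n.+1) \sum_(l <= k < n.+1) F k = \sum_(1 <= k < n.+1) k%:R * F k.
Proof.
elim: n => [|n IH]; first by rewrite !big_geq.
rewrite (big_nat_recr n.+1) //= [RHS](big_nat_recr n.+1) //= -IH big_nat1.
rewrite (eq_big_nat _ _ (F2 := fun l => \sum_(l <= k < n.+1) F k + F n.+1)); last first.
  by move=> l /andP[_ ln]; rewrite big_nat_recr // ltnW.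
by rewrite big_split /= sumr_const_nat subn1 /= -addrA -mulrSr mulr_natl.
Qed.

Theorem lemma6p9 (R : realType) (r : nat) (hr : (1 <= r)%N) :
  (forall (l : nat) (a : nat -> R), (1 <= l <= r)%N ->
     is_derive (a l) 1 (fun t : R => C1 r (upd a l t))
       (- \sum_(l <= k < r.+1)
            C1 k.-1 a * C1 (r - k) (fun i => a (i + k)%N)))
  /\
  (forall x : R,
     is_derive x 1 (fun t : R => C1 r (fun _ => t))
       (- \sum_(1 <= l < r.+1) \sum_(l <= k < r.+1)
            C1 k.-1 (fun _ => x) * C1 (r - k) (fun _ => x)))
  /\
  (forall x : R,
     \sum_(1 <= l < r.+1) \sum_(l <= k < r.+1)
        C1 k.-1 (fun _ => x) * C1 (r - k) (fun _ => x)
     = \sum_(1 <= k < r.+1) k%:R * C1 (r - k) (fun _ => x) * C1 k.-1 (fun _ => x)).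
Proof.
split; [|split].
- case=> // l0 a /andP[_ l0r].
  rewrite big_add1 /= -(C1_partialE a l0r); exact: is_derive_C1_upd.
- move=> x; apply: (is_derive_eq (is_derive_C1_const r x)).
  rewrite -sumrN big_add1 /= big_mkord; apply: eq_bigr => l0 _.
  by rewrite (C1_partialE _ (ltn_ord l0)) big_add1.
- by move=> x; rewrite sum_triangle; apply: eq_bigr => k _; rewrite mulrA mulrAC.
Qed.
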